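(* Let $a<0$ and $b\in\mathbb{R}$, and put $$C_{a,b}=\max\left\{\frac12,\ \frac{2-a-b}{2(2-a)},\ \frac{2a^2+(2a-1)b+2-3a}{2(1-2a)(2-a)},\ \frac{1-b}{2(1-2a)}\right\}.$$ Then $F_{(a,b)}(t):=2C_{a,b}\,\Phi_{(a-1,1-a,0,b)}(t)-\Phi_{(a,1,-a,-1)}(t)>0$ for all $t>0$.
   Context: For real $\lambda_0,\dots,\lambda_N$, the fundamental function $\Phi_{(\lambda_0,\dots,\lambda_N)}$ is the unique solution $u$ of $\prod_{j=0}^N(\frac{d}{dt}-\lambda_j)u=0$ with $u^{(k)}(0)=0$ for $0\le k\le N-1$ and $u^{(N)}(0)=1$. *)

From Stdlib Require Import Reals List.
From Coquelicot Require Import Coquelicot.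
Open Scope R_scope.

Definition Dop (l : R) (g : R -> R) : R -> R :=
  fun t => Derive g t - l * g t.

(* prod_{l in ls} (d/dt - l) applied to g (the factors commute on smooth g). *)
Fixpoint Lop (ls : list R) (g : R -> R) : R -> R :=
  match ls with
  | nil => g
  | l :: ls' => Dop l (Lop ls' g)
  end.

(* u is the fundamental function Phi_(lambda_0,...,lambda_N) where
   ls = [lambda_0; ...; lambda_N] (so N = length ls - 1):
   u is a (smooth) solution on R of prod_j (d/dt - lambda_j) u = 0 with
   u^(k)(0) = 0 for k <= N-1 and u^(N)(0) = 1. *)
Definition is_fundamental (ls : list R) (u : R -> R) : Prop :=
  (forall (n : nat) (t : R), ex_derive_n u n t) /\
  (forall t : R, Lop ls u t = 0) /\
  (forall k : nat, (k < pred (length ls))%nat -> Derive_n u k 0 = 0) /\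
  Derive_n u (pred (length ls)) 0 = 1.

Definition Cab (a b : R) : R :=
  Rmax (Rmax (1/2) ((2 - a - b) / (2 * (2 - a))))
       (Rmax ((2 * a ^ 2 + (2 * a - 1) * b + 2 - 3 * a) / (2 * (1 - 2 * a) * (2 - a)))
             ((1 - b) / (2 * (1 - 2 * a)))).

(* Since F 0 = 0 and (F (t) exp (-b t))' = exp (-b t) (d/dt - b) F (t), it suffices
   that (d/dt - b) F > 0 on (0, oo) (pos_of_Dop_pos).  Each fundamental function is
   solved one first-order factor at a time (Dop_solution, fundamental4_stages):
   (d/dt - b) Phi1 = (cosh ((1 - a) t) - 1) / (1 - a)^2, and Phi2 is an explicit
   hyperbolic expression.  In the variables x = (1 - a) t / 2 and
   rho = (1 + a) / (1 - a), which lies in (-1, 1), the quantity (1 - a)^2 (d/dt - b) F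
   becomes
       4 C sinh^2 x - 2 sinh x shc rho x + 2 b / (1 - rho) N rho x,
   where shc r x = sinh (r x) / r and N r x = cosh x shc r x - sinh x cosh (r x).
   Its positivity (core_pos) rests on shc r x < sinh x and on two estimates of N
   (Nf_le_sinh_sq, Nf_lt_sinh_mixed), proved by comparing derivatives with the
   integrals A0 x = int_0^x y sinh y dy, A1 x = int_0^x sinh^2 y dy and a few Taylor
   bounds for sinh and cosh.  Only three of the four entries of C_{a,b} are needed. *)

From Stdlib Require Import Reals Lra Psatz List.
From Coquelicot Require Import Coquelicot.
Import ListNotations.
Open Scope R_scope.

(* Real-valued instances of Coquelicot's sum, difference, product and
   extensionality rules, stated with the operations of R so that they apply by
   unification. *)
Lemma is_derive_Rplus (f g : R -> R) (x df dg : R) :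
  is_derive f x df -> is_derive g x dg -> is_derive (fun t => f t + g t) x (df + dg).
Proof. exact (is_derive_plus f g x df dg). Qed.

Lemma is_derive_Rminus (f g : R -> R) (x df dg : R) :
  is_derive f x df -> is_derive g x dg -> is_derive (fun t => f t - g t) x (df - dg).
Proof. exact (is_derive_minus f g x df dg). Qed.

Lemma is_derive_Rmult (f g : R -> R) (x df dg : R) :
  is_derive f x df -> is_derive g x dg ->
  is_derive (fun t => f t * g t) x (df * g x + f x * dg).
Proof. intros Hf Hg. exact (is_derive_mult f g x df dg Hf Hg Rmult_comm). Qed.

Lemma is_derive_Rext (f g : R -> R) (x l : R) :
  (forall t, f t = g t) -> is_derive f x l -> is_derive g x l.
Proof. exact (is_derive_ext f g x l). Qed.

Lemma is_derive_rescaled (F : R -> R) (k t dF : R) :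
  is_derive F (k * t) dF -> is_derive (fun s => F (k * s)) t (k * dF).
Proof.
  intro HF. apply (is_derive_comp F (fun s => k * s) t dF k HF).
  auto_derive; [exact I | ring].
Qed.

Lemma le_by_deriv (f df : R -> R) (a b : R) :
  a <= b -> (forall y, a <= y <= b -> is_derive f y (df y)) ->
  (forall y, a < y < b -> 0 <= df y) -> f a <= f b.
Proof.
  intros Hab Hd Hpos. destruct (Rle_lt_or_eq_dec a b Hab) as [Hlt|<-]; [|lra].
  destruct (MVT_cor2 f df a b Hlt) as [c [Hc Hin]].
  - intros y Hy. apply is_derive_Reals, Hd, Hy.
  - specialize (Hpos c Hin). nra.
Qed.

Lemma lt_by_deriv (f df : R -> R) (a b : R) :
  a < b -> (forall y, a <= y <= b -> is_derive f y (df y)) ->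
  (forall y, a < y < b -> 0 < df y) -> f a < f b.
Proof.
  intros Hab Hd Hpos.
  destruct (MVT_cor2 f df a b Hab) as [c [Hc Hin]].
  - intros y Hy. apply is_derive_Reals, Hd, Hy.
  - specialize (Hpos c Hin). nra.
Qed.

Lemma nonneg_by_deriv (f df : R -> R) :
  (forall y, 0 <= y -> is_derive f y (df y)) -> (forall y, 0 < y -> 0 <= df y) ->
  0 <= f 0 -> forall x, 0 <= x -> 0 <= f x.
Proof.
  intros Hd Hpos H0 x Hx.
  enough (f 0 <= f x) by lra.
  apply (le_by_deriv f df 0 x Hx); intros y Hy; [apply Hd | apply Hpos]; lra.
Qed.

Lemma pos_by_deriv (f df : R -> R) :
  (forall y, 0 <= y -> is_derive f y (df y)) -> (forall y, 0 < y -> 0 < df y) ->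
  0 <= f 0 -> forall x, 0 < x -> 0 < f x.
Proof.
  intros Hd Hpos H0 x Hx.
  enough (f 0 < f x) by lra.
  apply (lt_by_deriv f df 0 x Hx); intros y Hy; [apply Hd | apply Hpos]; lra.
Qed.

Lemma const_of_deriv_zero (h : R -> R) :
  (forall t, is_derive h t 0) -> forall s t, h s = h t.
Proof.
  intros Hd.
  assert (Hle : forall s t, s <= t -> h s <= h t /\ - h s <= - h t).
  { intros s t Hst. split.
    - apply (le_by_deriv h (fun _ => 0) s t Hst); [intros; apply Hd | intros; lra].
    - apply (le_by_deriv (fun y => - h y) (fun _ => 0) s t Hst); [|intros; lra].
      intros y _. rewrite <- Ropp_0. exact (is_derive_opp h y 0 (Hd y)). }
  intros s t. destruct (Rle_or_lt s t) as [H|H%Rlt_le]; destruct (Hle _ _ H); lra.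
Qed.

Lemma linear_ode_unique (f1 f2 g : R -> R) (l : R) :
  (forall t, is_derive f1 t (l * f1 t + g t)) ->
  (forall t, is_derive f2 t (l * f2 t + g t)) ->
  f1 0 = f2 0 -> forall t, f1 t = f2 t.
Proof.
  intros H1 H2 H0 t.
  set (h := fun s => (f1 s - f2 s) * exp (- l * s)).
  assert (Hh : forall s, is_derive h s 0).
  { intro s. unfold h.
    replace 0 with ((l * f1 s + g s - (l * f2 s + g s)) * exp (- l * s)
                    + (f1 s - f2 s) * (- l * exp (- l * s))) by ring.
    apply (is_derive_Rmult (fun s => f1 s - f2 s) (fun s => exp (- l * s))).
    { apply is_derive_Rminus; auto. }
    auto_derive; [exact I | ring]. }
  pose proof (const_of_deriv_zero h Hh t 0) as E. unfold h in E.
  rewrite H0, Rminus_diag, !Rmult_0_l in E.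
  pose proof (exp_pos (- l * t)). apply Rmult_integral in E. lra.
Qed.

Definition smooth (u : R -> R) : Prop := forall (n : nat) (t : R), ex_derive_n u n t.

Lemma Derive_n_Dop (l : R) (Y : R -> R) : smooth Y -> forall n t,
  ex_derive_n (Dop l Y) n t /\
  Derive_n (Dop l Y) n t = Derive_n Y (S n) t - l * Derive_n Y n t.
Proof.
  intros HY n. induction n as [|n IH]; intro t; [split; reflexivity|].
  assert (Heq : forall s, Derive_n Y (S n) s - l * Derive_n Y n s = Derive_n (Dop l Y) n s)
    by (intro s; symmetry; apply IH).
  assert (HdS : ex_derive (Derive_n Y (S n)) t) by exact (HY (S (S n)) t).
  assert (Hd : ex_derive (Derive_n Y n) t) by exact (HY (S n) t).
  split.
  - apply (ex_derive_ext _ _ t Heq).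
    apply (ex_derive_minus _ (fun s => l * Derive_n Y n s)); [|apply ex_derive_scal]; assumption.
  - simpl Derive_n at 1. rewrite <- (Derive_ext _ _ t Heq).
    rewrite Derive_minus, Derive_scal; [reflexivity | assumption | apply ex_derive_scal, Hd].
Qed.

Lemma smooth_Dop (l : R) (Y : R -> R) : smooth Y -> smooth (Dop l Y).
Proof. intros HY n t. apply (Derive_n_Dop l Y HY n t). Qed.

Lemma smooth_Lop (ls : list R) (u : R -> R) : smooth u -> smooth (Lop ls u).
Proof. intros Hu. induction ls as [|l ls IH]; [exact Hu | apply smooth_Dop, IH]. Qed.

Definition flat_at0 (n : nat) (Y : R -> R) : Prop :=
  forall k, (k < n)%nat -> Derive_n Y k 0 = 0.

Lemma Dop_flat (l : R) (Y : R -> R) (n : nat) : smooth Y -> flat_at0 (S n) Y ->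
  flat_at0 n (Dop l Y) /\ Derive_n (Dop l Y) n 0 = Derive_n Y (S n) 0.
Proof.
  intros HY Hflat. split.
  - intros k Hk. rewrite (proj2 (Derive_n_Dop l Y HY k 0)).
    rewrite !Hflat by lia. ring.
  - rewrite (proj2 (Derive_n_Dop l Y HY n 0)), (Hflat n) by lia. ring.
Qed.

Lemma Lop_flat (ls : list R) (u : R -> R) : smooth u -> forall m,
  flat_at0 (length ls + m) u ->
  flat_at0 m (Lop ls u) /\ Derive_n (Lop ls u) m 0 = Derive_n u (length ls + m) 0.
Proof.
  intros Hu. induction ls as [|l ls IH]; intros m Hflat; [split; [exact Hflat | reflexivity]|].
  simpl length in *. rewrite Nat.add_succ_comm in Hflat |- *.
  destruct (IH (S m) Hflat) as [Hfl Hval].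
  destruct (Dop_flat l (Lop ls u) m (smooth_Lop ls u Hu) Hfl) as [Hfl' Hval'].
  split; [exact Hfl' | simpl Lop; rewrite Hval', Hval; reflexivity].
Qed.

Lemma Lop_at0 (ls : list R) (u : R -> R) : smooth u -> flat_at0 (length ls) u ->
  Lop ls u 0 = Derive_n u (length ls) 0.
Proof.
  intros Hu Hflat. rewrite <- (Nat.add_0_r (length ls)).
  exact (proj2 (Lop_flat ls u Hu 0 ltac:(rewrite Nat.add_0_r; exact Hflat))).
Qed.

Lemma Lop_cons (l : R) (ls : list R) (u : R -> R) (t : R) :
  Lop (l :: ls) u t = Dop l (Lop ls u) t.
Proof. reflexivity. Qed.

Lemma Lop_single (l : R) (u : R -> R) (t : R) : Lop [l] u t = Dop l u t.
Proof. reflexivity. Qed.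

(* If (d/dt - b) f > 0 on (0, oo) and f 0 = 0 then f > 0 on (0, oo), since
   (f exp (- b t))' = exp (- b t) (d/dt - b) f. *)
Lemma pos_of_Dop_pos (b : R) (f : R -> R) : (forall t, ex_derive f t) -> f 0 = 0 ->
  (forall t, 0 < t -> 0 < Dop b f t) -> forall t, 0 < t -> 0 < f t.
Proof.
  intros Hf H0 HD t Ht.
  assert (HK : 0 < f t * exp (- b * t)).
  { revert t Ht.
    apply (pos_by_deriv (fun s => f s * exp (- b * s)) (fun s => Dop b f s * exp (- b * s)));
      [ | | rewrite H0; lra].
    - intros s _. unfold Dop.
      replace ((Derive f s - b * f s) * exp (- b * s))
        with (Derive f s * exp (- b * s) + f s * (- b * exp (- b * s))) by ring.
      apply (is_derive_Rmult f (fun s => exp (- b * s))).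
      + apply Derive_correct, Hf.
      + auto_derive; [exact I | ring].
    - intros s Hs. apply Rmult_lt_0_compat; [apply HD, Hs | apply exp_pos]. }
  pose proof (exp_pos (- b * t)). nra.
Qed.

Lemma Dop_comb (l c : R) (f g : R -> R) (t : R) : ex_derive f t -> ex_derive g t ->
  Dop l (fun s => c * f s - g s) t = c * Dop l f t - Dop l g t.
Proof.
  intros Hf Hg. unfold Dop.
  rewrite (Derive_minus (fun s => c * f s) g), Derive_scal; [ring | | exact Hg].
  apply ex_derive_scal, Hf.
Qed.

Lemma Dop_solution (l : R) (Y f g : R -> R) : smooth Y ->
  (forall t, Dop l Y t = g t) -> (forall t, is_derive f t (l * f t + g t)) ->
  Y 0 = f 0 -> forall t, Y t = f t.
Proof.
  intros HY HD Hf H0. apply (linear_ode_unique Y f g l); [|exact Hf | exact H0].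
  intro t. rewrite <- HD. unfold Dop.
  replace (l * Y t + (Derive Y t - l * Y t)) with (Derive Y t) by ring.
  apply Derive_correct, (HY 1%nat t).
Qed.

Lemma fundamental4_stages (l0 l1 l2 l3 : R) (u : R -> R) :
  is_fundamental [l0; l1; l2; l3] u ->
  smooth u /\ (forall t, Dop l0 (Lop [l1; l2; l3] u) t = 0) /\
  Lop [l1; l2; l3] u 0 = 1 /\ Lop [l2; l3] u 0 = 0 /\ Lop [l3] u 0 = 0 /\ u 0 = 0.
Proof.
  intros [Hs [HL [Hflat H3]]]. simpl in Hflat, H3.
  assert (Hfl : forall n, (n <= 3)%nat -> flat_at0 n u)
    by (intros n Hn k Hk; apply Hflat; lia).
  repeat split; [exact Hs | exact HL | | | | exact (Hflat 0%nat ltac:(lia))].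
  - rewrite (Lop_at0 [l1; l2; l3] u Hs (Hfl 3%nat ltac:(lia))). exact H3.
  - rewrite (Lop_at0 [l2; l3] u Hs (Hfl 2%nat ltac:(lia))). apply Hflat. simpl. lia.
  - rewrite (Lop_at0 [l3] u Hs (Hfl 1%nat ltac:(lia))). apply Hflat. simpl. lia.
Qed.

Ltac derive_explicit := intros; unfold sinh, cosh; auto_derive; try exact I; field; try assumption.

Lemma is_derive_sinh (x : R) : is_derive sinh x (cosh x).
Proof. apply is_derive_Reals, derivable_pt_lim_sinh. Qed.

Lemma is_derive_cosh (x : R) : is_derive cosh x (sinh x).
Proof. apply is_derive_Reals, derivable_pt_lim_cosh. Qed.

Lemma cosh_minus_sinh (x : R) : cosh x - sinh x = exp (- x).
Proof. unfold cosh, sinh. field. Qed.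

Lemma cosh_sinh_sq (x : R) : cosh x ^ 2 - sinh x ^ 2 = 1.
Proof.
  unfold cosh, sinh.
  replace 1 with (exp x * exp (- x)) by (rewrite <- exp_plus, Rplus_opp_r; apply exp_0).
  field.
Qed.

Lemma cosh_pos (x : R) : 0 < cosh x.
Proof. unfold cosh. pose proof (exp_pos x). pose proof (exp_pos (- x)). lra. Qed.

Lemma cosh_ge_1 (x : R) : 1 <= cosh x.
Proof. pose proof (cosh_sinh_sq x). pose proof (cosh_pos x). nra. Qed.

Lemma sinh_lt_cosh (x : R) : sinh x < cosh x.
Proof. pose proof (cosh_minus_sinh x). pose proof (exp_pos (- x)). lra. Qed.

Lemma sinh_pos (x : R) : 0 < x -> 0 < sinh x.
Proof. intro Hx. rewrite <- sinh_0. apply sinh_lt, Hx. Qed.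

Lemma sinh_nonneg (x : R) : 0 <= x -> 0 <= sinh x.
Proof. intros [Hx| <-]; [left; apply sinh_pos, Hx | rewrite sinh_0; lra]. Qed.

Lemma sinh_opp (x : R) : sinh (- x) = - sinh x.
Proof. unfold sinh. rewrite Ropp_involutive. field. Qed.

Lemma cosh_opp (x : R) : cosh (- x) = cosh x.
Proof. unfold cosh. rewrite Ropp_involutive. field. Qed.

Lemma cosh_double (x : R) : cosh (2 * x) = 1 + 2 * sinh x ^ 2.
Proof.
  pose proof (cosh_sinh_sq x) as Hsq. unfold cosh, sinh in *.
  replace (2 * x) with (x + x) by ring. replace (- (x + x)) with (- x + - x) by ring.
  rewrite !exp_plus. nra.
Qed.

Lemma cosh_le_mono (u v : R) : 0 <= u <= v -> cosh u <= cosh v.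
Proof.
  intro H. apply (le_by_deriv cosh sinh); [lra | intros; apply is_derive_cosh |].
  intros y Hy. apply sinh_nonneg. lra.
Qed.

Lemma cosh_lt_mono (u v : R) : 0 <= u < v -> cosh u < cosh v.
Proof.
  intro H. apply (lt_by_deriv cosh sinh); [lra | intros; apply is_derive_cosh |].
  intros y Hy. apply sinh_pos. lra.
Qed.

Lemma sinh_lower1 (x : R) : 0 <= x -> x <= sinh x.
Proof.
  intro Hx. cut (0 <= sinh x - x); [lra|]. revert x Hx.
  apply (nonneg_by_deriv _ (fun y => cosh y - 1)); [derive_explicit | | rewrite sinh_0; lra].
  intros y _. pose proof (cosh_ge_1 y). lra.
Qed.

Lemma cosh_lower2 (x : R) : 0 <= x -> 1 + x ^ 2 / 2 <= cosh x.
Proof.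
  intro Hx. cut (0 <= cosh x - (1 + x ^ 2 / 2)); [lra|]. revert x Hx.
  apply (nonneg_by_deriv _ (fun y => sinh y - y)); [derive_explicit | | rewrite cosh_0; lra].
  intros y Hy. pose proof (sinh_lower1 y). lra.
Qed.

Lemma sinh_lower3 (x : R) : 0 <= x -> x + x ^ 3 / 6 <= sinh x.
Proof.
  intro Hx. cut (0 <= sinh x - (x + x ^ 3 / 6)); [lra|]. revert x Hx.
  apply (nonneg_by_deriv _ (fun y => cosh y - (1 + y ^ 2 / 2)));
    [derive_explicit | | rewrite sinh_0; lra].
  intros y Hy. pose proof (cosh_lower2 y). lra.
Qed.

Lemma cosh_lower4 (x : R) : 0 <= x -> 1 + x ^ 2 / 2 + x ^ 4 / 24 <= cosh x.
Proof.
  intro Hx. cut (0 <= cosh x - (1 + x ^ 2 / 2 + x ^ 4 / 24)); [lra|]. revert x Hx.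
  apply (nonneg_by_deriv _ (fun y => sinh y - (y + y ^ 3 / 6)));
    [derive_explicit | | rewrite cosh_0; lra].
  intros y Hy. pose proof (sinh_lower3 y). lra.
Qed.

Lemma sinh_lower5 (x : R) : 0 <= x -> x + x ^ 3 / 6 + x ^ 5 / 120 <= sinh x.
Proof.
  intro Hx. cut (0 <= sinh x - (x + x ^ 3 / 6 + x ^ 5 / 120)); [lra|]. revert x Hx.
  apply (nonneg_by_deriv _ (fun y => cosh y - (1 + y ^ 2 / 2 + y ^ 4 / 24)));
    [derive_explicit | | rewrite sinh_0; lra].
  intros y Hy. pose proof (cosh_lower4 y). lra.
Qed.

Lemma sinh_le_x_cosh (x : R) : 0 <= x -> sinh x <= x * cosh x.
Proof.
  intro Hx. cut (0 <= x * cosh x - sinh x); [lra|]. revert x Hx.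
  apply (nonneg_by_deriv _ (fun y => y * sinh y)); [derive_explicit | | rewrite sinh_0; lra].
  intros y Hy. pose proof (sinh_pos y Hy). nra.
Qed.

Lemma cosh_upper2 (x : R) : 0 <= x -> cosh x <= 1 + x ^ 2 * cosh x / 2.
Proof.
  intro Hx. cut (0 <= 1 + x ^ 2 * cosh x / 2 - cosh x); [lra|]. revert x Hx.
  apply (nonneg_by_deriv _ (fun y => y * cosh y + y ^ 2 * sinh y / 2 - sinh y));
    [derive_explicit | | rewrite cosh_0; lra].
  intros y Hy. pose proof (sinh_le_x_cosh y). pose proof (sinh_pos y Hy). nra.
Qed.

Lemma sinh_upper3 (x : R) : 0 <= x -> sinh x <= x + x ^ 3 * cosh x / 6.
Proof.
  intro Hx. cut (0 <= x + x ^ 3 * cosh x / 6 - sinh x); [lra|]. revert x Hx.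
  apply (nonneg_by_deriv _ (fun y => 1 + (3 * y ^ 2 * cosh y + y ^ 3 * sinh y) / 6 - cosh y));
    [derive_explicit | | rewrite sinh_0; lra].
  intros y Hy. pose proof (cosh_upper2 y). pose proof (sinh_pos y Hy).
  assert (0 <= y ^ 3 * sinh y) by (apply Rmult_le_pos; [apply pow_le|]; lra). nra.
Qed.

Lemma cosh_upper4 (x : R) : 0 <= x -> cosh x <= 1 + x ^ 2 / 2 + x ^ 4 * cosh x / 24.
Proof.
  intro Hx. cut (0 <= 1 + x ^ 2 / 2 + x ^ 4 * cosh x / 24 - cosh x); [lra|]. revert x Hx.
  apply (nonneg_by_deriv _ (fun y => y + (4 * y ^ 3 * cosh y + y ^ 4 * sinh y) / 24 - sinh y));
    [derive_explicit | | rewrite cosh_0; lra].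
  intros y Hy. pose proof (sinh_upper3 y). pose proof (sinh_pos y Hy).
  assert (0 <= y ^ 4 * sinh y) by (apply Rmult_le_pos; [apply pow_le|]; lra). nra.
Qed.

Lemma sinh_upper5 (x : R) : 0 <= x -> sinh x <= x + x ^ 3 / 6 + x ^ 5 * cosh x / 120.
Proof.
  intro Hx. cut (0 <= x + x ^ 3 / 6 + x ^ 5 * cosh x / 120 - sinh x); [lra|]. revert x Hx.
  apply (nonneg_by_deriv _
    (fun y => 1 + y ^ 2 / 2 + (5 * y ^ 4 * cosh y + y ^ 5 * sinh y) / 120 - cosh y));
    [derive_explicit | | rewrite sinh_0; lra].
  intros y Hy. pose proof (cosh_upper4 y). pose proof (sinh_pos y Hy).
  assert (0 <= y ^ 5 * sinh y) by (apply Rmult_le_pos; [apply pow_le|]; lra). nra.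
Qed.

Lemma cosh_upper6 (x : R) : 0 <= x ->
  cosh x <= 1 + x ^ 2 / 2 + x ^ 4 / 24 + x ^ 6 * cosh x / 720.
Proof.
  intro Hx. cut (0 <= 1 + x ^ 2 / 2 + x ^ 4 / 24 + x ^ 6 * cosh x / 720 - cosh x); [lra|].
  revert x Hx.
  apply (nonneg_by_deriv _
    (fun y => y + y ^ 3 / 6 + (6 * y ^ 5 * cosh y + y ^ 6 * sinh y) / 720 - sinh y));
    [derive_explicit | | rewrite cosh_0; lra].
  intros y Hy. pose proof (sinh_upper5 y). pose proof (sinh_pos y Hy).
  assert (0 <= y ^ 6 * sinh y) by (apply Rmult_le_pos; [apply pow_le|]; lra). nra.
Qed.

(* The two integrals A0 x = int_0^x y sinh y dy and A1 x = int_0^x sinh^2 y dy,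
   in which the function N below is estimated. *)
Definition A0 (x : R) : R := x * cosh x - sinh x.
Definition A1 (x : R) : R := (sinh x * cosh x - x) / 2.

Lemma is_derive_A0 (x : R) : is_derive A0 x (x * sinh x).
Proof. unfold A0. derive_explicit. Qed.

Lemma is_derive_A1 (x : R) : is_derive A1 x (sinh x ^ 2).
Proof.
  unfold A1, sinh, cosh. auto_derive; try exact I.
  rewrite exp_Ropp. field. apply Rgt_not_eq, exp_pos.
Qed.

Lemma A0_upper7 (x : R) : 0 <= x -> A0 x <= x ^ 3 / 3 + x ^ 5 / 30 + x ^ 7 * cosh x / 840.
Proof.
  intro Hx. cut (0 <= x ^ 3 / 3 + x ^ 5 / 30 + x ^ 7 * cosh x / 840 - A0 x); [lra|].
  revert x Hx. unfold A0.
  apply (nonneg_by_deriv _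
    (fun y => y ^ 2 + y ^ 4 / 6 + (7 * y ^ 6 * cosh y + y ^ 7 * sinh y) / 840 - y * sinh y));
    [derive_explicit | | rewrite sinh_0, cosh_0; lra].
  intros y Hy. pose proof (sinh_upper5 y). pose proof (sinh_pos y Hy).
  assert (0 <= y ^ 7 * sinh y) by (apply Rmult_le_pos; [apply pow_le|]; lra). nra.
Qed.

Lemma A0_lt_sinh_sq (x : R) : 0 < x -> 3 * A0 x < sinh x ^ 2.
Proof.
  intro Hx. cut (0 < sinh x ^ 2 - 3 * A0 x); [lra|]. revert x Hx. unfold A0.
  apply (pos_by_deriv _ (fun y => sinh y * (2 * cosh y - 3 * y)));
    [derive_explicit | | rewrite sinh_0, cosh_0; lra].
  intros y Hy. pose proof (sinh_pos y Hy). pose proof (cosh_lower4 y ltac:(lra)).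
  pose proof (pow2_ge_0 (y ^ 2 - 7 / 5)). pose proof (pow2_ge_0 (y - 45 / 37)).
  assert (0 < 2 * cosh y - 3 * y) by nra. nra.
Qed.

Lemma A0_le_sinh_sq (x : R) : 0 <= x -> 3 * A0 x <= sinh x ^ 2.
Proof.
  intros [Hx| <-]; [left; apply A0_lt_sinh_sq, Hx|].
  unfold A0. rewrite sinh_0, cosh_0. lra.
Qed.

Lemma A1_le_sinh_sq (x : R) : 0 <= x -> 2 * A1 x <= sinh x ^ 2.
Proof.
  intro Hx. cut (0 <= sinh x ^ 2 - 2 * A1 x); [lra|]. revert x Hx.
  apply (nonneg_by_deriv _ (fun y => 2 * sinh y * (cosh y - sinh y)));
    [ | | unfold A1; rewrite sinh_0, cosh_0; lra].
  - intros y _. replace (2 * sinh y * (cosh y - sinh y))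
      with (2 * cosh y * sinh y - 2 * sinh y ^ 2) by ring.
    apply (is_derive_Rminus (fun y => sinh y ^ 2) (fun y => 2 * A1 y)).
    + derive_explicit.
    + apply is_derive_scal, is_derive_A1.
  - intros y Hy. pose proof (sinh_pos y Hy). pose proof (sinh_lt_cosh y). nra.
Qed.

Lemma A0_le_A1 (x : R) : 0 <= x -> A0 x <= A1 x.
Proof.
  intro Hx. cut (0 <= A1 x - A0 x); [lra|]. revert x Hx.
  apply (nonneg_by_deriv _ (fun y => sinh y * (sinh y - y)));
    [| | unfold A0, A1; rewrite sinh_0, cosh_0; lra].
  - intros y _. replace (sinh y * (sinh y - y)) with (sinh y ^ 2 - y * sinh y) by ring.
    apply is_derive_Rminus; [apply is_derive_A1 | apply is_derive_A0].
  - intros y Hy. pose proof (sinh_pos y Hy). pose proof (sinh_lower1 y). nra.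
Qed.

(* 3 sinh^2 x - 2 x sinh x - 4 A1 x = (sinh x - x)^2 - (x - 1)^2 + exp (-2x) > 0. *)
Lemma sinh_sq_bound_A1 (x : R) : 0 < x -> 0 < 3 * sinh x ^ 2 - 2 * x * sinh x - 4 * A1 x.
Proof.
  intro Hx.
  replace (3 * sinh x ^ 2 - 2 * x * sinh x - 4 * A1 x)
    with ((sinh x - x) ^ 2 - (x - 1) ^ 2 + (cosh x - sinh x) ^ 2
          + (1 - (cosh x ^ 2 - sinh x ^ 2))) by (unfold A1; field).
  rewrite cosh_sinh_sq, cosh_minus_sinh.
  pose proof (exp_pos (- x)). destruct (Rle_or_lt 1 x) as [H1|H1].
  - (* sinh x - x >= x^3/6 >= x - 1 *)
    pose proof (sinh_lower3 x ltac:(lra)).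
    assert (0 <= x * (x - 3 / 2) ^ 2) by (apply Rmult_le_pos; [lra | apply pow2_ge_0]).
    pose proof (pow2_ge_0 (x - 11 / 8)). nra.
  - (* exp (-x) > 1 - x > 0 *)
    pose proof (exp_ineq1 (- x) ltac:(intro; lra)).
    assert (0 < (exp (- x) - (1 - x)) * (exp (- x) + (1 - x))) by (apply Rmult_lt_0_compat; lra).
    pose proof (pow2_ge_0 (sinh x - x)). nra.
Qed.

Lemma cosh_le_small (x : R) : 0 <= x <= 163 / 100 -> cosh x <= 27 / 10.
Proof.
  intro Hx. pose proof (cosh_upper6 x ltac:(lra)).
  assert (x ^ 2 <= 26569 / 10000) by nra. assert (x ^ 4 <= (26569 / 10000) ^ 2) by nra.
  assert (x ^ 6 <= (26569 / 10000) ^ 3) by nra. nra.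
Qed.

(* On [0, 163/100] the estimate 7 A0 < 3 sinh^2 - x sinh reduces, through the
   Taylor bounds and cosh <= 27/10, to the positivity of a polynomial. *)
Lemma sinh_sq_bound_A0_small (x : R) : 0 < x < 163 / 100 ->
  0 < 3 * sinh x ^ 2 - x * sinh x - 7 * A0 x.
Proof.
  intro Hx. pose proof (cosh_le_small x ltac:(lra)) as Hc.
  set (L := x + x ^ 3 / 6 + x ^ 5 / 120).
  assert (HL : L <= sinh x) by (apply sinh_lower5; lra).
  assert (HL0 : 0 <= L) by (unfold L; assert (0 <= x ^ 3) by (apply pow_le; lra);
                            assert (0 <= x ^ 5) by (apply pow_le; lra); lra).
  assert (Hs : sinh x <= x + x ^ 3 / 6 + x ^ 5 * (27 / 10) / 120).
  { pose proof (sinh_upper5 x ltac:(lra)). assert (0 <= x ^ 5) by (apply pow_le; lra). nra. }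
  assert (HA : A0 x <= x ^ 3 / 3 + x ^ 5 / 30 + x ^ 7 * (27 / 10) / 840).
  { pose proof (A0_upper7 x ltac:(lra)). assert (0 <= x ^ 7) by (apply pow_le; lra). nra. }
  assert (Hsq : L ^ 2 <= sinh x ^ 2) by (apply pow_incr; lra).
  (* the resulting polynomial, divided by x^2, is a sum of nonnegative terms *)
  assert (Hp : 0 < 3 * (1 + x ^ 2 / 6 + x ^ 4 / 120) ^ 2 - (1 + x ^ 2 / 6 + 27 / 10 * x ^ 4 / 120)
                   - 7 * (x / 3 + x ^ 3 / 30 + 27 / 10 * x ^ 5 / 840)).
  { replace (3 * (1 + x ^ 2 / 6 + x ^ 4 / 120) ^ 2 - (1 + x ^ 2 / 6 + 27 / 10 * x ^ 4 / 120)
               - 7 * (x / 3 + x ^ 3 / 30 + 27 / 10 * x ^ 5 / 840))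
      with (19 / 200 * (x ^ 2 - 70 / 57 * x) ^ 2
            + (2 - 7 / 3 * x + (5 / 6 - 19 / 200 * (70 / 57) ^ 2) * x ^ 2)
            + x ^ 4 * (1 / 120 * (x - 27 / 20) ^ 2 + (19 / 1200 - 1 / 120 * (27 / 20) ^ 2))
            + x ^ 8 / 4800) by field.
    assert (0 < 2 - 7 / 3 * x + (5 / 6 - 19 / 200 * (70 / 57) ^ 2) * x ^ 2)
      by (pose proof (pow2_ge_0 (x - 169 / 100)); nra).
    assert (0 <= x ^ 4 * (1 / 120 * (x - 27 / 20) ^ 2 + (19 / 1200 - 1 / 120 * (27 / 20) ^ 2))).
    { apply Rmult_le_pos; [apply pow_le; lra|]. pose proof (pow2_ge_0 (x - 27 / 20)). lra. }
    pose proof (pow2_ge_0 (x ^ 2 - 70 / 57 * x)). assert (0 <= x ^ 8) by (apply pow_le; lra).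
    lra. }
  assert (Hx2 : 0 < x ^ 2) by nra.
  assert (0 < 3 * L ^ 2 - x * (x + x ^ 3 / 6 + x ^ 5 * (27 / 10) / 120)
              - 7 * (x ^ 3 / 3 + x ^ 5 / 30 + x ^ 7 * (27 / 10) / 840)).
  { replace (3 * L ^ 2 - x * (x + x ^ 3 / 6 + x ^ 5 * (27 / 10) / 120)
               - 7 * (x ^ 3 / 3 + x ^ 5 / 30 + x ^ 7 * (27 / 10) / 840))
      with (x ^ 2 * (3 * (1 + x ^ 2 / 6 + x ^ 4 / 120) ^ 2 - (1 + x ^ 2 / 6 + 27 / 10 * x ^ 4 / 120)
                     - 7 * (x / 3 + x ^ 3 / 30 + 27 / 10 * x ^ 5 / 840))) by (unfold L; field).
    apply Rmult_lt_0_compat; lra. }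
  nra.
Qed.

Lemma sinh_sq_bound_A0 (x : R) : 0 < x -> 0 < 3 * sinh x ^ 2 - x * sinh x - 7 * A0 x.
Proof.
  intro Hx. pose proof (A0_lt_sinh_sq x Hx). pose proof (sinh_pos x Hx).
  destruct (Rle_or_lt (3 / 2 * x) (sinh x)) as [Hbig|Hsmall]; [nra|].
  apply sinh_sq_bound_A0_small. split; [exact Hx|].
  (* sinh x < 3x/2 forces x < 163/100 *)
  destruct (Rlt_or_le x (163 / 100)) as [Hlt|Hge]; [exact Hlt|].
  pose proof (sinh_lower5 x ltac:(lra)).
  assert (x ^ 2 >= 163 / 100 * (163 / 100)) by nra.
  assert (x ^ 4 >= (163 / 100 * (163 / 100)) ^ 2) by nra.
  assert (x * (x ^ 2 / 6 + x ^ 4 / 120 - 1 / 2) >= 0) by nra. nra.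
Qed.

(* shc k x = sinh (k x) / k, extended by its limit x at k = 0. *)
Definition shc (k x : R) : R := if Req_EM_T k 0 then x else sinh (k * x) / k.

Lemma shc_mul (k x : R) : k * shc k x = sinh (k * x).
Proof.
  unfold shc. destruct (Req_EM_T k 0) as [->|Hk]; [rewrite Rmult_0_l, sinh_0; ring|].
  field. exact Hk.
Qed.

Lemma shc_0 (k : R) : shc k 0 = 0.
Proof.
  unfold shc. destruct (Req_EM_T k 0) as [|Hk]; [reflexivity|].
  rewrite Rmult_0_r, sinh_0. field. exact Hk.
Qed.

Lemma shc_opp (k x : R) : shc (- k) x = shc k x.
Proof.
  unfold shc. destruct (Req_EM_T k 0) as [->|Hk].
  - rewrite Ropp_0. destruct (Req_EM_T 0 0); [reflexivity | contradiction].
  - destruct (Req_EM_T (- k) 0); [lra|].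
    replace (- k * x) with (- (k * x)) by ring. rewrite sinh_opp. field. exact Hk.
Qed.

Lemma is_derive_shc (k x : R) : is_derive (shc k) x (cosh (k * x)).
Proof.
  unfold shc. destruct (Req_EM_T k 0) as [->|Hk].
  - rewrite Rmult_0_l, cosh_0. auto_derive; [exact I | reflexivity].
  - derive_explicit.
Qed.

Lemma shc_nonneg (k x : R) : 0 <= x -> 0 <= shc k x.
Proof.
  revert x. apply (nonneg_by_deriv _ (fun y => cosh (k * y))); [ | | rewrite shc_0; lra].
  - intros y _. apply is_derive_shc.
  - intros y _. left. apply cosh_pos.
Qed.

Lemma shc_le_sinh (r x : R) : 0 <= r <= 1 -> 0 <= x -> shc r x <= sinh x.
Proof.
  intros Hr Hx. cut (0 <= sinh x - shc r x); [lra|]. revert x Hx.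
  apply (nonneg_by_deriv _ (fun y => cosh y - cosh (r * y))); [ | | rewrite sinh_0, shc_0; lra].
  - intros y _. apply is_derive_Rminus; [apply is_derive_sinh | apply is_derive_shc].
  - intros y Hy. pose proof (cosh_le_mono (r * y) y ltac:(nra)). lra.
Qed.

Lemma shc_lt_sinh (r x : R) : 0 <= r < 1 -> 0 < x -> shc r x < sinh x.
Proof.
  intros Hr Hx. cut (0 < sinh x - shc r x); [lra|]. revert x Hx.
  apply (pos_by_deriv _ (fun y => cosh y - cosh (r * y))); [ | | rewrite sinh_0, shc_0; lra].
  - intros y _. apply is_derive_Rminus; [apply is_derive_sinh | apply is_derive_shc].
  - intros y Hy. pose proof (cosh_lt_mono (r * y) y ltac:(nra)). lra.
Qed.

Lemma shc_upper_mixed (r x : R) : 0 <= r <= 1 -> 0 <= x ->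
  (3 - r) * shc r x <= 3 * (1 - r) * x + 2 * r * sinh x.
Proof.
  intros Hr Hx.
  assert (Hh : forall u, 0 <= u -> 0 <= 2 * sinh u - (3 - r) * sinh (r * u)).
  { apply (nonneg_by_deriv _ (fun u => 2 * cosh u - (3 - r) * (r * cosh (r * u))));
      [derive_explicit | | rewrite Rmult_0_r, sinh_0; lra].
    intros y Hy. pose proof (cosh_le_mono (r * y) y ltac:(nra)).
    pose proof (cosh_pos (r * y)). assert (0 <= (1 - r) * (2 - r)) by nra. nra. }
  assert (Hg : forall u, 0 <= u -> 0 <= 3 * (1 - r) + 2 * r * cosh u - (3 - r) * cosh (r * u)).
  { apply (nonneg_by_deriv _ (fun u => r * (2 * sinh u - (3 - r) * sinh (r * u))));
      [derive_explicit | | rewrite Rmult_0_r, cosh_0; lra].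
    intros y Hy. specialize (Hh y ltac:(lra)). nra. }
  cut (0 <= 3 * (1 - r) * x + 2 * r * sinh x - (3 - r) * shc r x); [lra|]. revert x Hx.
  apply (nonneg_by_deriv _ (fun u => 3 * (1 - r) + 2 * r * cosh u - (3 - r) * cosh (r * u)));
    [ | exact (fun y Hy => Hg y (Rlt_le _ _ Hy)) | rewrite sinh_0, shc_0; lra].
  intros y _.
  apply (is_derive_Rminus (fun u => 3 * (1 - r) * u + 2 * r * sinh u) (fun u => (3 - r) * shc r u));
    [derive_explicit | apply is_derive_scal, is_derive_shc].
Qed.

Lemma shc_upper_cubic (r x : R) : 0 <= r <= 1 -> 0 <= x -> shc r x <= x + r ^ 2 * (sinh x - x).
Proof.
  intros Hr Hx.
  assert (Hg : forall u, 0 <= u -> 0 <= 1 + r ^ 2 * (cosh u - 1) - cosh (r * u)).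
  { apply (nonneg_by_deriv _ (fun u => r ^ 2 * sinh u - r * sinh (r * u)));
      [derive_explicit | | rewrite Rmult_0_r, cosh_0; lra].
    intros y Hy. rewrite <- shc_mul. pose proof (shc_le_sinh r y Hr ltac:(lra)). nra. }
  cut (0 <= x + r ^ 2 * (sinh x - x) - shc r x); [lra|]. revert x Hx.
  apply (nonneg_by_deriv _ (fun u => 1 + r ^ 2 * (cosh u - 1) - cosh (r * u)));
    [ | exact (fun y Hy => Hg y (Rlt_le _ _ Hy)) | rewrite sinh_0, shc_0; lra].
  intros y _.
  apply (is_derive_Rminus (fun u => u + r ^ 2 * (sinh u - u)) (shc r));
    [derive_explicit | apply is_derive_shc].
Qed.

(* The function N_r x = cosh x shc r x - sinh x cosh (r x), whose derivative in x
   is (1 - r^2) sinh x shc r x; the second fundamental function is a multiple of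
   it after rescaling. *)
Definition Nf (r x : R) : R := cosh x * shc r x - sinh x * cosh (r * x).

Lemma is_derive_Nf (r x : R) : is_derive (Nf r) x ((1 - r ^ 2) * sinh x * shc r x).
Proof.
  unfold Nf.
  replace ((1 - r ^ 2) * sinh x * shc r x) with
    ((sinh x * shc r x + cosh x * cosh (r * x))
     - (cosh x * cosh (r * x) + sinh x * (r * sinh (r * x))))
    by (rewrite <- shc_mul; ring).
  apply (is_derive_Rminus (fun y => cosh y * shc r y) (fun y => sinh y * cosh (r * y))).
  - apply is_derive_Rmult; [apply is_derive_cosh | apply is_derive_shc].
  - apply (is_derive_Rmult sinh (fun y => cosh (r * y))); [apply is_derive_sinh | derive_explicit].
Qed.

Lemma Nf_opp (r x : R) : Nf (- r) x = Nf r x.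
Proof.
  unfold Nf. rewrite shc_opp. replace (- r * x) with (- (r * x)) by ring.
  rewrite cosh_opp. reflexivity.
Qed.

Lemma Nf_nonneg (r x : R) : -1 <= r <= 1 -> 0 <= x -> 0 <= Nf r x.
Proof.
  intros Hr. revert x.
  apply (nonneg_by_deriv _ (fun y => (1 - r ^ 2) * sinh y * shc r y));
    [intros; apply is_derive_Nf | | unfold Nf; rewrite shc_0, sinh_0; lra].
  intros y Hy. pose proof (sinh_pos y Hy). pose proof (shc_nonneg r y ltac:(lra)).
  assert (0 <= 1 - r ^ 2) by nra. apply Rmult_le_pos; [apply Rmult_le_pos|]; lra.
Qed.

Lemma Nf_upper_mixed (r x : R) : 0 <= r <= 1 -> 0 <= x ->
  (3 - r) * Nf r x <= (1 - r ^ 2) * (3 * (1 - r) * A0 x + 2 * r * A1 x).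
Proof.
  intros Hr Hx.
  cut (0 <= (1 - r ^ 2) * (3 * (1 - r) * A0 x + 2 * r * A1 x) - (3 - r) * Nf r x); [lra|].
  revert x Hx.
  apply (nonneg_by_deriv _ (fun y => (1 - r ^ 2) * sinh y
                                     * (3 * (1 - r) * y + 2 * r * sinh y - (3 - r) * shc r y)));
    [ | | unfold Nf, A0, A1; rewrite shc_0, sinh_0, cosh_0; lra].
  - intros y _.
    replace ((1 - r ^ 2) * sinh y * (3 * (1 - r) * y + 2 * r * sinh y - (3 - r) * shc r y))
      with ((1 - r ^ 2) * (3 * (1 - r) * (y * sinh y) + 2 * r * sinh y ^ 2)
            - (3 - r) * ((1 - r ^ 2) * sinh y * shc r y)) by ring.
    apply is_derive_Rminus; apply is_derive_scal; [|apply is_derive_Nf].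
    apply is_derive_Rplus; apply is_derive_scal; [apply is_derive_A0 | apply is_derive_A1].
  - intros y Hy. pose proof (shc_upper_mixed r y Hr ltac:(lra)). pose proof (sinh_pos y Hy).
    assert (0 <= 1 - r ^ 2) by nra. apply Rmult_le_pos; [apply Rmult_le_pos|]; lra.
Qed.

Lemma Nf_upper_cubic (r x : R) : 0 <= r <= 1 -> 0 <= x ->
  Nf r x <= (1 - r ^ 2) * (A0 x + r ^ 2 * (A1 x - A0 x)).
Proof.
  intros Hr Hx.
  cut (0 <= (1 - r ^ 2) * (A0 x + r ^ 2 * (A1 x - A0 x)) - Nf r x); [lra|]. revert x Hx.
  apply (nonneg_by_deriv _ (fun y => (1 - r ^ 2) * sinh y * (y + r ^ 2 * (sinh y - y) - shc r y)));
    [ | | unfold Nf, A0, A1; rewrite shc_0, sinh_0, cosh_0; lra].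
  - intros y _.
    replace ((1 - r ^ 2) * sinh y * (y + r ^ 2 * (sinh y - y) - shc r y))
      with ((1 - r ^ 2) * (y * sinh y + r ^ 2 * (sinh y ^ 2 - y * sinh y))
            - (1 - r ^ 2) * sinh y * shc r y) by ring.
    apply is_derive_Rminus; [|apply is_derive_Nf].
    apply is_derive_scal, is_derive_Rplus; [apply is_derive_A0|].
    apply is_derive_scal, is_derive_Rminus; [apply is_derive_A1 | apply is_derive_A0].
  - intros y Hy. pose proof (shc_upper_cubic r y Hr ltac:(lra)). pose proof (sinh_pos y Hy).
    assert (0 <= 1 - r ^ 2) by nra. apply Rmult_le_pos; [apply Rmult_le_pos|]; lra.
Qed.

Lemma Nf_le_sinh_sq (r x : R) : 0 <= r <= 1 -> 0 <= x ->
  (3 - r) * Nf r x <= (1 - r ^ 2) * sinh x ^ 2.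
Proof.
  intros Hr Hx. pose proof (Nf_upper_mixed r x Hr Hx).
  pose proof (A0_le_sinh_sq x Hx). pose proof (A1_le_sinh_sq x Hx).
  assert (0 <= 1 - r ^ 2) by nra.
  assert (3 * (1 - r) * A0 x + 2 * r * A1 x <= sinh x ^ 2) by nra. nra.
Qed.

Lemma Nf_lt_sinh_mixed (r x : R) : 0 < r < 1 -> 0 < x ->
  (3 + r) * Nf r x < (1 + r) * sinh x * (sinh x - r * shc r x).
Proof.
  intros Hr Hx.
  pose proof (Nf_upper_cubic r x ltac:(lra) ltac:(lra)).
  pose proof (shc_upper_cubic r x ltac:(lra) ltac:(lra)).
  pose proof (sinh_pos x Hx). pose proof (A0_le_A1 x ltac:(lra)).
  pose proof (A0_lt_sinh_sq x Hx). pose proof (sinh_sq_bound_A1 x Hx).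
  pose proof (sinh_sq_bound_A0 x Hx).
  set (s := sinh x) in *. set (a0 := A0 x) in *. set (a1 := A1 x) in *.
  (* after inserting both cubic bounds the difference is (1 - r^2) times a
     positive combination of the four comparisons above *)
  assert (Hkey : (1 + r) * s * (s - r * x - r ^ 3 * (s - x))
                 - (3 + r) * ((1 - r ^ 2) * (a0 + r ^ 2 * (a1 - a0)))
     = (1 - r ^ 2) * ((1 - r) ^ 2 * (s ^ 2 - 3 * a0) + r * (1 - r) * (3 * s ^ 2 - x * s - 7 * a0)
                      + r ^ 2 * (3 * s ^ 2 - 2 * x * s - 4 * a1) + r ^ 2 * (1 - r) * (a1 - a0)))
    by ring.
  assert (0 < (1 - r) ^ 2 * (s ^ 2 - 3 * a0) + r * (1 - r) * (3 * s ^ 2 - x * s - 7 * a0)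
              + r ^ 2 * (3 * s ^ 2 - 2 * x * s - 4 * a1) + r ^ 2 * (1 - r) * (a1 - a0)).
  { assert (0 < (1 - r) ^ 2 * (s ^ 2 - 3 * a0)) by (apply Rmult_lt_0_compat; nra).
    assert (0 < r * (1 - r) * (3 * s ^ 2 - x * s - 7 * a0)) by (apply Rmult_lt_0_compat; nra).
    assert (0 < r ^ 2 * (3 * s ^ 2 - 2 * x * s - 4 * a1)) by (apply Rmult_lt_0_compat; nra).
    assert (0 <= r ^ 2 * (1 - r) * (a1 - a0)) by (apply Rmult_le_pos; nra).
    lra. }
  assert (0 < 1 - r ^ 2) by nra.
  assert ((3 + r) * Nf r x <= (3 + r) * ((1 - r ^ 2) * (a0 + r ^ 2 * (a1 - a0))))
    by (apply Rmult_le_compat_l; lra).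
  assert ((1 + r) * s * (s - r * x - r ^ 3 * (s - x)) <= (1 + r) * s * (s - r * shc r x))
    by (apply Rmult_le_compat_l; nra).
  nra.
Qed.

(* Positivity of  kappa sinh^2 x - 2 sinh x shc r x + coefficient * N_r x  in the
   three regimes needed below; kappa plays the role of 4 C. *)
Lemma core_nonneg_coeff (r x kappa m : R) : 0 <= r < 1 -> 0 < x -> 2 <= kappa -> 0 <= m ->
  0 < kappa * sinh x ^ 2 - 2 * sinh x * shc r x + m * Nf r x.
Proof.
  intros Hr Hx Hk Hm.
  pose proof (shc_lt_sinh r x Hr Hx). pose proof (sinh_pos x Hx).
  pose proof (Nf_nonneg r x ltac:(lra) ltac:(lra)).
  assert (0 <= m * Nf r x) by (apply Rmult_le_pos; lra).
  assert (0 < sinh x * (sinh x - shc r x)) by (apply Rmult_lt_0_compat; lra).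
  nra.
Qed.

Lemma core_neg_coeff_large (r x kappa beta : R) : 0 <= r < 1 -> 0 < x -> 0 <= beta ->
  2 + 2 * beta * (1 - r) / (3 - r) <= kappa ->
  0 < kappa * sinh x ^ 2 - 2 * sinh x * shc r x - 2 * beta / (1 + r) * Nf r x.
Proof.
  intros Hr Hx Hb Hk.
  pose proof (shc_lt_sinh r x Hr Hx). pose proof (sinh_pos x Hx).
  pose proof (Nf_le_sinh_sq r x ltac:(lra) ltac:(lra)) as HN.
  (* by Nf_le_sinh_sq the N-term costs at most 2 beta (1 - r) / (3 - r) sinh^2 x *)
  assert (2 * beta / (1 + r) * Nf r x <= 2 * beta * (1 - r) / (3 - r) * sinh x ^ 2).
  { replace (2 * beta / (1 + r) * Nf r x)
      with (2 * beta / ((1 + r) * (3 - r)) * ((3 - r) * Nf r x)) by (field; lra).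
    replace (2 * beta * (1 - r) / (3 - r) * sinh x ^ 2)
      with (2 * beta / ((1 + r) * (3 - r)) * ((1 - r ^ 2) * sinh x ^ 2)) by (field; lra).
    apply Rmult_le_compat_l; [|exact HN].
    apply Rmult_le_pos; [lra | left; apply Rinv_0_lt_compat; nra]. }
  assert (0 < sinh x * (sinh x - shc r x)) by (apply Rmult_lt_0_compat; lra).
  assert (0 <= sinh x ^ 2) by nra. nra.
Qed.

(* Here kappa must dominate two affine functions of beta; they cross at
   beta = bs := (1 - r)(3 + r) / (r (1 + r)), where both equal 2 / r. *)
Lemma core_neg_coeff_small (r x kappa beta : R) : 0 < r < 1 -> 0 < x -> 0 <= beta ->
  2 + 2 * beta * (1 + r) / (3 + r) <= kappa -> 2 * (1 + beta) * (1 + r) / (3 - r) <= kappa ->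
  0 < kappa * sinh x ^ 2 - 2 * sinh x * shc r x - 2 * beta / (1 - r) * Nf r x.
Proof.
  intros Hr Hx Hb Hk2 Hk4.
  pose proof (shc_lt_sinh r x ltac:(lra) Hx). pose proof (sinh_pos x Hx).
  pose proof (Nf_le_sinh_sq r x ltac:(lra) ltac:(lra)) as HN1.
  pose proof (Nf_lt_sinh_mixed r x Hr Hx) as HN2.
  set (s := sinh x) in *. set (S := shc r x) in *. set (N := Nf r x) in *.
  set (bs := (1 - r) * (3 + r) / (r * (1 + r))).
  assert (Hbs : 0 < bs) by (unfold bs; apply Rdiv_lt_0_compat; nra).
  assert (Hs2 : 0 <= s ^ 2) by nra.
  (* the value at the crossing point is positive by Nf_lt_sinh_mixed *)
  assert (HV : 0 < 2 / r * s ^ 2 - 2 * s * S - 2 * bs / (1 - r) * N).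
  { replace (2 / r * s ^ 2 - 2 * s * S - 2 * bs / (1 - r) * N)
      with (2 / (r * (1 + r)) * ((1 + r) * s * (s - r * S) - (3 + r) * N))
      by (unfold bs; field; lra).
    apply Rmult_lt_0_compat; [apply Rdiv_lt_0_compat; nra | lra]. }
  assert (HW0 : 0 < 2 * s ^ 2 - 2 * s * S).
  { assert (0 < s * (s - S)) by (apply Rmult_lt_0_compat; lra). nra. }
  destruct (Rle_or_lt beta bs) as [Hle|Hgt].
  - (* below the crossing: interpolate between beta = 0 and beta = bs *)
    set (m := 2 * (1 + r) / (3 + r) * s ^ 2 - 2 / (1 - r) * N).
    assert (Hend : 2 * s ^ 2 - 2 * s * S + bs * m
                   = 2 / r * s ^ 2 - 2 * s * S - 2 * bs / (1 - r) * N)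
      by (unfold m, bs; field; lra).
    assert (Hmid : 0 < 2 * s ^ 2 - 2 * s * S + beta * m).
    { destruct (Rle_or_lt 0 m); [nra|]. assert (beta * m >= bs * m) by nra. lra. }
    assert (E : (2 + 2 * beta * (1 + r) / (3 + r)) * s ^ 2 - 2 * s * S - 2 * beta / (1 - r) * N
                = 2 * s ^ 2 - 2 * s * S + beta * m) by (unfold m; field; lra).
    assert (kappa * s ^ 2 >= (2 + 2 * beta * (1 + r) / (3 + r)) * s ^ 2) by nra.
    lra.
  - (* above the crossing: the slope in beta is nonnegative by Nf_le_sinh_sq *)
    assert (Hslope : 0 <= 2 * (1 + r) / (3 - r) * s ^ 2 - 2 / (1 - r) * N).
    { replace (2 * (1 + r) / (3 - r) * s ^ 2 - 2 / (1 - r) * N)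
        with (2 / ((1 - r) * (3 - r)) * ((1 - r ^ 2) * s ^ 2 - (3 - r) * N)) by (field; lra).
      apply Rmult_le_pos; [apply Rlt_le, Rdiv_lt_0_compat; nra | lra]. }
    assert (kappa * s ^ 2 >= 2 * (1 + beta) * (1 + r) / (3 - r) * s ^ 2) by nra.
    assert (E : 2 * (1 + beta) * (1 + r) / (3 - r) * s ^ 2 - 2 * s * S - 2 * beta / (1 - r) * N
                = (2 / r * s ^ 2 - 2 * s * S - 2 * bs / (1 - r) * N)
                  + (beta - bs) * (2 * (1 + r) / (3 - r) * s ^ 2 - 2 / (1 - r) * N))
      by (unfold bs; field; lra).
    assert (0 <= (beta - bs) * (2 * (1 + r) / (3 - r) * s ^ 2 - 2 / (1 - r) * N))
      by (apply Rmult_le_pos; lra).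
    lra.
Qed.

(* The same positivity for a parameter rho in (-1, 1) and an arbitrary real b;
   shc and N are even in rho, and the signs of rho and b select the regime. *)
Lemma core_pos (rho b kappa x : R) : -1 < rho < 1 -> 0 < x -> 2 <= kappa ->
  2 - 2 * b * (1 + rho) / (3 + rho) <= kappa ->
  2 * (1 - b) * (1 + rho) / (3 - rho) <= kappa ->
  0 < kappa * sinh x ^ 2 - 2 * sinh x * shc rho x + 2 * b / (1 - rho) * Nf rho x.
Proof.
  intros Hrho Hx Hk1 Hk2 Hk4.
  destruct (Rle_lt_dec 0 b) as [Hb|Hb].
  { destruct (Rle_or_lt rho 0) as [Hneg|Hpos].
    - rewrite <- (Ropp_involutive rho), shc_opp, Nf_opp.
      apply core_nonneg_coeff; [lra | exact Hx | exact Hk1 | apply Rmult_le_pos; [lra|]].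
      left. apply Rinv_0_lt_compat. lra.
    - apply core_nonneg_coeff; [lra | exact Hx | exact Hk1 | apply Rmult_le_pos; [lra|]].
      left. apply Rinv_0_lt_compat. lra. }
  destruct (Rle_or_lt rho 0) as [Hneg|Hpos].
  - set (r := - rho) in *. assert (Er : rho = - r) by (unfold r; ring). clearbody r. subst rho.
    rewrite shc_opp, Nf_opp.
    replace (2 * b / (1 - - r) * Nf r x) with (- (2 * - b / (1 + r) * Nf r x)) by (field; lra).
    apply core_neg_coeff_large; [lra | exact Hx | lra |].
    replace (2 + 2 * - b * (1 - r) / (3 - r)) with (2 - 2 * b * (1 + - r) / (3 + - r))
      by (field; lra).
    exact Hk2.
  - replace (2 * b / (1 - rho) * Nf rho x) with (- (2 * - b / (1 - rho) * Nf rho x))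
      by (field; lra).
    apply core_neg_coeff_small; [lra | exact Hx | lra | |].
    + replace (2 + 2 * - b * (1 + rho) / (3 + rho)) with (2 - 2 * b * (1 + rho) / (3 + rho))
        by (field; lra).
      exact Hk2.
    + replace (2 * (1 + - b) * (1 + rho) / (3 - rho)) with (2 * (1 - b) * (1 + rho) / (3 - rho))
        by (field; lra).
      exact Hk4.
Qed.

Lemma Dop_Phi1 (a b : R) (Phi1 : R -> R) : a <> 1 ->
  is_fundamental [a - 1; 1 - a; 0; b] Phi1 ->
  forall t, Dop b Phi1 t = (cosh ((1 - a) * t) - 1) / (1 - a) ^ 2.
Proof.
  intros Ha Hf. assert (Hd : 1 - a <> 0) by lra.
  destruct (fundamental4_stages _ _ _ _ _ Hf) as (Hs & HL & H3 & H2 & H1 & _).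
  assert (Y1 : forall t, Lop [1 - a; 0; b] Phi1 t = exp ((a - 1) * t)).
  { apply (Dop_solution (a - 1) (Lop [1 - a; 0; b] Phi1) _ (fun _ => 0));
      [apply smooth_Lop, Hs | exact HL | |].
    - intros t. auto_derive; [exact I | ring].
    - rewrite H3, Rmult_0_r, exp_0. reflexivity. }
  assert (Y2 : forall t, Lop [0; b] Phi1 t = sinh ((1 - a) * t) / (1 - a)).
  { apply (Dop_solution (1 - a) (Lop [0; b] Phi1) _ (fun t => exp ((a - 1) * t)));
      [apply smooth_Lop, Hs | intro t; rewrite <- Lop_cons; apply Y1 | |].
    - intros t. replace ((a - 1) * t) with (- ((1 - a) * t)) by ring. derive_explicit.
    - rewrite H2, Rmult_0_r, sinh_0. field. exact Hd. }
  intro t. rewrite <- Lop_single. revert t.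
  apply (Dop_solution 0 (Lop [b] Phi1) _ (fun t => sinh ((1 - a) * t) / (1 - a)));
    [apply smooth_Lop, Hs | intro t; rewrite <- Lop_cons; apply Y2 | derive_explicit |].
  rewrite H1, Rmult_0_r, cosh_0. field. exact Hd.
Qed.

(* The second fundamental function, written in the variable x = (1 - a) t / 2 and
   the parameter rho = (1 + a) / (1 - a), together with its derivative. *)
Definition rho_of (a : R) : R := (1 + a) / (1 - a).

Definition Phi2_closed (a t : R) : R :=
  Nf (rho_of a) ((1 - a) / 2 * t) / (- a * (1 - a)).

Definition Phi2_slope (a t : R) : R :=
  2 * sinh ((1 - a) / 2 * t) * shc (rho_of a) ((1 - a) / 2 * t) / (1 - a) ^ 2.

Lemma is_derive_Phi2_closed (a t : R) : a <> 0 -> a <> 1 ->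
  is_derive (Phi2_closed a) t (Phi2_slope a t).
Proof.
  intros Ha0 Ha1. set (x := (1 - a) / 2 * t).
  apply (is_derive_Rext (fun s => / (- a * (1 - a)) * Nf (rho_of a) ((1 - a) / 2 * s)));
    [intro s; unfold Phi2_closed; field; lra|].
  replace (Phi2_slope a t)
    with (/ (- a * (1 - a)) * ((1 - a) / 2 * ((1 - rho_of a ^ 2) * sinh x * shc (rho_of a) x)))
    by (unfold Phi2_slope, rho_of; fold x; field; lra).
  apply is_derive_scal, is_derive_rescaled, is_derive_Nf.
Qed.

Lemma is_derive_Phi2_slope (a t : R) : a <> 1 ->
  let x := (1 - a) / 2 * t in
  is_derive (Phi2_slope a) t
    ((cosh x * shc (rho_of a) x + sinh x * cosh (rho_of a * x)) / (1 - a)).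
Proof.
  intros Ha1 x.
  apply (is_derive_Rext
    (fun s => 2 / (1 - a) ^ 2 * (sinh ((1 - a) / 2 * s) * shc (rho_of a) ((1 - a) / 2 * s))));
    [intro s; unfold Phi2_slope; field; lra|].
  replace ((cosh x * shc (rho_of a) x + sinh x * cosh (rho_of a * x)) / (1 - a))
    with (2 / (1 - a) ^ 2 * ((1 - a) / 2
            * (cosh x * shc (rho_of a) x + sinh x * cosh (rho_of a * x)))) by (field; lra).
  apply is_derive_scal.
  apply (is_derive_rescaled (fun y => sinh y * shc (rho_of a) y)).
  apply is_derive_Rmult; [apply is_derive_sinh | apply is_derive_shc].
Qed.

Lemma exp_diff_rescaled (a t : R) : a <> 1 ->
  let x := (1 - a) / 2 * t in
  exp t - exp (a * t) = 2 * sinh x * (cosh (rho_of a * x) + rho_of a * shc (rho_of a) x).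
Proof.
  intros Ha1 x. rewrite shc_mul.
  replace (exp t) with (exp (rho_of a * x + x)) by (f_equal; unfold x, rho_of; field; lra).
  replace (exp (a * t)) with (exp (rho_of a * x + - x)) by (f_equal; unfold x, rho_of; field; lra).
  rewrite !exp_plus. unfold sinh, cosh. field.
Qed.

Lemma Phi2_closed_0 (a : R) : Phi2_closed a 0 = 0.
Proof. unfold Phi2_closed, Nf. rewrite Rmult_0_r, shc_0, sinh_0. unfold Rdiv. ring. Qed.

Lemma Phi2_slope_0 (a : R) : Phi2_slope a 0 = 0.
Proof. unfold Phi2_slope. rewrite Rmult_0_r, shc_0, sinh_0. unfold Rdiv. ring. Qed.

Lemma Phi2_solution (a : R) (Phi2 : R -> R) : a <> 0 -> a <> 1 ->
  is_fundamental [a; 1; - a; -1] Phi2 -> forall t, Phi2 t = Phi2_closed a t.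
Proof.
  intros Ha0 Ha1 Hf. assert (Hd : 1 - a <> 0) by lra.
  destruct (fundamental4_stages _ _ _ _ _ Hf) as (Hs & HL & H3 & H2 & H1 & H0).
  assert (Y1 : forall t, Lop [1; - a; -1] Phi2 t = exp (a * t)).
  { apply (Dop_solution a (Lop [1; - a; -1] Phi2) _ (fun _ => 0));
      [apply smooth_Lop, Hs | exact HL | |].
    - intros t. auto_derive; [exact I | ring].
    - rewrite H3, Rmult_0_r, exp_0. reflexivity. }
  assert (Y2 : forall t, Lop [- a; -1] Phi2 t = (exp t - exp (a * t)) / (1 - a)).
  { apply (Dop_solution 1 (Lop [- a; -1] Phi2) _ (fun t => exp (a * t)));
      [apply smooth_Lop, Hs | intro t; rewrite <- Lop_cons; apply Y1 | |].
    - intros t. auto_derive; [exact I | field; exact Hd].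
    - rewrite H2, Rmult_0_r, exp_0. field. exact Hd. }
  assert (Y3 : forall t, Lop [-1] Phi2 t = Phi2_slope a t + Phi2_closed a t).
  { apply (Dop_solution (- a) (Lop [-1] Phi2) _ (fun t => (exp t - exp (a * t)) / (1 - a)));
      [apply smooth_Lop, Hs | intro t; rewrite <- Lop_cons; apply Y2 | |].
    - intros t. pose proof (is_derive_Phi2_slope a t Ha1) as Hslope.
      pose proof (exp_diff_rescaled a t Ha1) as Hexp. cbv zeta in Hslope, Hexp.
      rewrite Hexp.
      replace (- a * (Phi2_slope a t + Phi2_closed a t)
               + 2 * sinh ((1 - a) / 2 * t)
                   * (cosh (rho_of a * ((1 - a) / 2 * t))
                      + rho_of a * shc (rho_of a) ((1 - a) / 2 * t)) / (1 - a))
        with ((cosh ((1 - a) / 2 * t) * shc (rho_of a) ((1 - a) / 2 * t)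
               + sinh ((1 - a) / 2 * t) * cosh (rho_of a * ((1 - a) / 2 * t))) / (1 - a)
              + Phi2_slope a t)
        by (unfold Phi2_slope, Phi2_closed, Nf, rho_of; field; lra).
      apply is_derive_Rplus; [exact Hslope | apply is_derive_Phi2_closed; assumption].
    - rewrite H1, Phi2_slope_0, Phi2_closed_0. ring. }
  apply (Dop_solution (-1) Phi2 _ (fun t => Phi2_slope a t + Phi2_closed a t));
    [exact Hs | intro t; rewrite <- Lop_single; apply Y3 | |].
  - intros t. replace (-1 * Phi2_closed a t + (Phi2_slope a t + Phi2_closed a t))
      with (Phi2_slope a t) by ring.
    apply is_derive_Phi2_closed; assumption.
  - rewrite H0, Phi2_closed_0. reflexivity.
Qed.

Lemma Dop_Phi2 (a b : R) (Phi2 : R -> R) : a <> 0 -> a <> 1 ->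
  is_fundamental [a; 1; - a; -1] Phi2 ->
  forall t, Dop b Phi2 t = Phi2_slope a t - b * Phi2_closed a t.
Proof.
  intros Ha0 Ha1 Hf t. pose proof (Phi2_solution a Phi2 Ha0 Ha1 Hf) as HP.
  unfold Dop. rewrite (Derive_ext _ _ t HP), HP.
  rewrite (is_derive_unique _ _ _ (is_derive_Phi2_closed a t Ha0 Ha1)). reflexivity.
Qed.

(* The entries of the maximum defining C_{a,b} that the proof uses; the third one
   only enlarges the constant. *)
Lemma Cab_bounds (a b : R) :
  1 / 2 <= Cab a b /\ (2 - a - b) / (2 * (2 - a)) <= Cab a b /\
  (1 - b) / (2 * (1 - 2 * a)) <= Cab a b.
Proof.
  unfold Cab. repeat split; eapply Rle_trans;
    [apply Rmax_l | apply Rmax_l | apply Rmax_r | apply Rmax_l | apply Rmax_r | apply Rmax_r].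
Qed.

(* The derivative-level inequality: 2 C (d/dt - b) Phi1 > (d/dt - b) Phi2 on (0, oo).
   In x = (1 - a) t / 2 and rho = (1 + a) / (1 - a) it is core_pos with kappa = 4 C. *)
Lemma Dop_gap_pos (a b C t : R) : a < 0 -> 1 / 2 <= C ->
  (2 - a - b) / (2 * (2 - a)) <= C -> (1 - b) / (2 * (1 - 2 * a)) <= C -> 0 < t ->
  0 < 2 * C * ((cosh ((1 - a) * t) - 1) / (1 - a) ^ 2) - (Phi2_slope a t - b * Phi2_closed a t).
Proof.
  intros Ha HC1 HC2 HC4 Ht.
  set (x := (1 - a) / 2 * t). set (rho := rho_of a).
  assert (Hx : 0 < x) by (unfold x; apply Rmult_lt_0_compat; lra).
  assert (Hrho : -1 < rho < 1).
  { assert (E1 : 1 + rho = 2 / (1 - a)) by (unfold rho, rho_of; field; lra).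
    assert (E2 : 1 - rho = - 2 * a / (1 - a)) by (unfold rho, rho_of; field; lra).
    assert (0 < 2 / (1 - a)) by (apply Rdiv_lt_0_compat; lra).
    assert (0 < - 2 * a / (1 - a)) by (apply Rdiv_lt_0_compat; lra).
    lra. }
  replace (cosh ((1 - a) * t)) with (1 + 2 * sinh x ^ 2)
    by (rewrite <- cosh_double; f_equal; unfold x; field).
  replace (2 * C * ((1 + 2 * sinh x ^ 2 - 1) / (1 - a) ^ 2)
           - (Phi2_slope a t - b * Phi2_closed a t))
    with ((4 * C * sinh x ^ 2 - 2 * sinh x * shc rho x + 2 * b / (1 - rho) * Nf rho x)
          / (1 - a) ^ 2)
    by (unfold Phi2_slope, Phi2_closed; fold x rho; unfold rho, rho_of; field; lra).
  apply Rdiv_lt_0_compat; [| apply pow_lt; lra].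
  apply core_pos; [exact Hrho | exact Hx | lra | |].
  - replace (2 - 2 * b * (1 + rho) / (3 + rho)) with (4 * ((2 - a - b) / (2 * (2 - a))))
      by (unfold rho, rho_of; field; lra).
    lra.
  - replace (2 * (1 - b) * (1 + rho) / (3 - rho)) with (4 * ((1 - b) / (2 * (1 - 2 * a))))
      by (unfold rho, rho_of; field; lra).
    lra.
Qed.

Theorem mainTheorem19 (a b : R) (ha : a < 0) (Phi1 Phi2 : R -> R) :
  is_fundamental [a - 1; 1 - a; 0; b] Phi1 ->
  is_fundamental [a; 1; - a; -1] Phi2 ->
  forall t : R, 0 < t -> 2 * Cab a b * Phi1 t - Phi2 t > 0.
Proof.
  intros HF1 HF2 t Ht. assert (Ha0 : a <> 0) by lra. assert (Ha1 : a <> 1) by lra.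
  destruct (fundamental4_stages _ _ _ _ _ HF1) as (Hs1 & _ & _ & _ & _ & H01).
  destruct (fundamental4_stages _ _ _ _ _ HF2) as (Hs2 & _ & _ & _ & _ & H02).
  destruct (Cab_bounds a b) as (HC1 & HC2 & HC4).
  apply Rlt_gt.
  apply (pos_of_Dop_pos b (fun s => 2 * Cab a b * Phi1 s - Phi2 s)); [ | | | exact Ht].
  - intro s. apply (ex_derive_minus (fun s => 2 * Cab a b * Phi1 s) Phi2).
    + apply ex_derive_scal, (Hs1 1%nat s).
    + exact (Hs2 1%nat s).
  - rewrite H01, H02. ring.
  - intros s Hs.
    rewrite Dop_comb by (exact (Hs1 1%nat s) || exact (Hs2 1%nat s)).
    rewrite (Dop_Phi1 a b Phi1 Ha1 HF1), (Dop_Phi2 a b Phi2 Ha0 Ha1 HF2).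
    apply Dop_gap_pos; assumption.
Qed.
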